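(* Let $\Phi$ be a $k$-CNF on $x_1,\dots,x_n$ with a mist $\mathcal M$, let $\omega=\lceil\exp(n/k^2)\rceil$, and consider the run $\sigma^{[0]},\sigma^{[1]},\dots$ of Walksat$(\Phi,\omega)$. Let $\mathcal A$ be the event $\sigma^{[0]}\notin\mathcal D(\Phi,\mathcal M)$ and let $\mathcal H=\bigcup_{\mu\in\mathcal M,\,0\le t_1<t_2\le\omega}H_\mu(t_1,t_2)$. Then $$\Pr\big[\exists t\le\omega:\sigma^{[t]}\in S(\Phi)\,\big|\,\mathcal A\big]\le\Pr[\mathcal H\mid\mathcal A].$$
   Context: $\Phi$ has $m$ clauses; $\rho=2^{-k}m/n$, $\kappa=\ln k/k$. $U_\Phi(\sigma)$ is the set of indices of clauses unsatisfied by $\sigma$, $\mathcal U_\Phi(\sigma)=|U_\Phi(\sigma)|$, $T(\Phi)=\{\tau\in\{0,1\}^n:\mathcal U_\Phi(\tau)\le n\rho/10\}$, and $S(\Phi)\subseteq T(\Phi)$ is the set of satisfying assignments. $\mathrm{dist}$ is Hamming distance; $\mathcal D_\sigma(r_1,r_2)=\{\tau:\lfloor r_1\kappa n\rfloor\le\mathrm{dist}(\sigma,\tau)\le\lfloor r_2\kappa n\rfloor\}$. A mist is a set $\mathcal M\subseteq T(\Phi)$ whose distinct elements have pairwise distance at least $2\kappa n$ and such that every $\sigma\in T(\Phi)$ is within distance $2\kappa n$ of some $\mu\in\mathcal M$. $\mathcal D(\Phi,\mathcal M)=\bigcup_{\sigma\in\mathcal M}\mathcal D_\sigma(0,10)$.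 Walksat$(\Phi,\omega)$: $\sigma^{[0]}$ uniform in $\{0,1\}^n$; at step $i=0,\dots,\omega$, if $\sigma^{[i]}$ is satisfying the algorithm halts, otherwise it picks a uniformly random unsatisfied clause and a uniformly random position $j\in[k]$ in it and flips that literal's variable to obtain $\sigma^{[i+1]}$. For $\mu\in\mathcal M$ and $t_1<t_2$, $H_\mu(t_1,t_2)$ is the event that $\mathrm{dist}(\sigma^{[t_1]},\mu)=\lfloor10\kappa n\rfloor$, $\mathrm{dist}(\sigma^{[t_2]},\mu)=\lfloor5\kappa n\rfloor$, and $\sigma^{[t]}\in\mathcal D_\mu(5,10)\setminus T(\Phi)$ for all $t_1\le t\le t_2$.
   Formalization: The inequality holds only for k ≥ k₀ and n ≥ n₀, where k₀ is some fixed threshold and n₀ is some threshold depending on k. The paper assumes this as well. *)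

From Stdlib Require Import Reals.
From HB Require Import structures.
From mathcomp Require Import all_boot all_order all_algebra.
Set Implicit Arguments. Unset Strict Implicit. Unset Printing Implicit Defensive.
Import Order.TTheory GRing.Theory Num.Theory.

Definition floorN (x : R) : nat := Z.to_nat (Int_part x).          (* floor, clipped at 0 *)
Definition ceilN (x : R) : nat := Z.to_nat (- Int_part (- x)).     (* ceiling, clipped at 0 *)
Definition Rleb (x y : R) : bool := if Rle_dec x y then true else false.

Definition kappa (k : nat) : R := Rdiv (ln (INR k)) (INR k).
Definition rho (n m k : nat) : R := Rdiv (Rmult (Rinv (pow 2 k)) (INR m)) (INR n).
Definition omega (n k : nat) : nat := ceilN (exp (Rdiv (INR n) (INR (k ^ 2)))).

(* A literal on x_1..x_n: (variable, sign); sign true = positive literal x_v. *)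
Definition literal (n : nat) := ('I_n * bool)%type.
Definition clause (n k : nat) := (k.-tuple (literal n))%type.
Definition kcnf (n k m : nat) := (m.-tuple (clause n k))%type.
Definition assignment (n : nat) := {ffun 'I_n -> bool}.

Definition lit_sat n (s : assignment n) (l : literal n) : bool := s l.1 == l.2.
Definition clause_sat n k (s : assignment n) (c : clause n k) : bool :=
  [exists j : 'I_k, lit_sat s (tnth c j)].

Definition Uset n k m (Phi : kcnf n k m) (s : assignment n) : {set 'I_m} :=
  [set i : 'I_m | ~~ clause_sat s (tnth Phi i)].

Definition Tset n k m (Phi : kcnf n k m) : {set assignment n} :=
  [set t : assignment n |
     Rleb (INR #|Uset Phi t|) (Rdiv (Rmult (INR n) (rho n m k)) 10)].
Definition Sset n k m (Phi : kcnf n k m) : {set assignment n} :=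
  [set t : assignment n | Uset Phi t == set0].

Definition dist n (s t : assignment n) : nat := #|[set i : 'I_n | s i != t i]|.

Definition Dball n k (s : assignment n) (r1 r2 : nat) : {set assignment n} :=
  [set t : assignment n |
     (floorN (Rmult (INR r1) (Rmult (kappa k) (INR n))) <= dist s t)%N &&
     (dist s t <= floorN (Rmult (INR r2) (Rmult (kappa k) (INR n))))%N].

Definition is_mist n k m (Phi : kcnf n k m) (M : {set assignment n}) : Prop :=
  [/\ M \subset Tset Phi,
      (forall mu mu', mu \in M -> mu' \in M -> mu <> mu' ->
         Rle (Rmult 2 (Rmult (kappa k) (INR n))) (INR (dist mu mu'))) &
      (forall s, s \in Tset Phi -> exists2 mu, mu \in M &
         Rle (INR (dist s mu)) (Rmult 2 (Rmult (kappa k) (INR n))))].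

Definition Dunion n k (M : {set assignment n}) : {set assignment n} :=
  \bigcup_(mu in M) Dball k mu 0 10.

Definition flip n (s : assignment n) (v : 'I_n) : assignment n :=
  [ffun i => if i == v then ~~ s i else s i].

Local Open Scope ring_scope.

(* One-step transition probability sigma -> tau. If sigma is satisfying the
   algorithm has halted; we keep the state frozen (probability 1 of staying). *)
Definition step_prob n k m (Phi : kcnf n k m) (s t : assignment n) : rat :=
  if Uset Phi s == set0 then (t == s)%:R
  else (\sum_(i in Uset Phi s) \sum_(j < k)
          ((flip s (tnth (tnth Phi i) j).1 == t)%:R : rat))
       / ((#|Uset Phi s| * k)%N)%:R.

Definition traj (n w : nat) := {ffun 'I_w.+1 -> assignment n}.

Definition traj_weight n k m (Phi : kcnf n k m) w (tr : traj n w) : rat :=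
  (2 ^+ n)^-1 * \prod_(i < w) step_prob Phi (tr (inord i)) (tr (inord i.+1)).

Definition Pr n k m (Phi : kcnf n k m) w (E : pred (traj n w)) : rat :=
  \sum_(tr : traj n w | E tr) traj_weight Phi tr.

(* Conditional probability Pr[E | F] (taken to be 0 if Pr[F] = 0). *)
Definition Prc n k m (Phi : kcnf n k m) w (E F : pred (traj n w)) : rat :=
  Pr Phi (fun tr => E tr && F tr) / Pr Phi F.

Definition EvA n k w (M : {set assignment n}) : pred (traj n w) :=
  fun tr => tr ord0 \notin Dunion k M.

Definition EvSat n k m (Phi : kcnf n k m) w : pred (traj n w) :=
  fun tr => [exists t : 'I_w.+1, tr t \in Sset Phi].

Definition EvHmu n k m (Phi : kcnf n k m) w (mu : assignment n) (t1 t2 : 'I_w.+1)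
  : pred (traj n w) :=
  fun tr =>
    [&& (t1 < t2)%N,
        dist (tr t1) mu == floorN (Rmult 10 (Rmult (kappa k) (INR n))),
        dist (tr t2) mu == floorN (Rmult 5 (Rmult (kappa k) (INR n))) &
        [forall t : 'I_w.+1, ((t1 <= t) && (t <= t2))%N ==>
            (tr t \in Dball k mu 5 10 :\: Tset Phi)]].

Definition EvH n k m (Phi : kcnf n k m) w (M : {set assignment n}) : pred (traj n w) :=
  fun tr => [exists mu in M, exists t1 : 'I_w.+1, exists t2 : 'I_w.+1,
               EvHmu Phi mu t1 t2 tr].

(* A run that starts outside D(Phi, M) and reaches a satisfying assignment enters
   T(Phi) at some first time tau, and then it is within 2 kappa n < floor(5 kappa n)
   of some mu in M, whereas at time 0 it is farther than floor(10 kappa n) from mu.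
   A Walksat step moves the distance to mu by at most one, so from the last visit of
   the outer sphere before the first visit of the inner one the run stays in the
   annulus D_mu(5, 10), and (being before tau) outside T(Phi): this is H_mu(t1, t2).
   So every satisfying run of positive weight lies in H, and the conditional
   probabilities compare term by term. *)
From Pilot Require Import Defs.
From Stdlib Require Import Reals ZArith Lra Lia.
From HB Require Import structures.
From mathcomp Require Import all_boot all_order all_algebra.
From mathcomp Require Import zify.
Set Implicit Arguments. Unset Strict Implicit.

Section RealBounds.
Local Open Scope R_scope.

Lemma floorN_bounds (y : R) : 0 <= y -> INR (floorN y) <= y /\ y - 1 < INR (floorN y).
Proof.
move=> y_ge0; rewrite /floorN; have [lb ub] := base_Int_part y.
have Int_part_ge0 : Z.le 0 (Int_part y).
  have : Z.lt (-1) (Int_part y) by apply: lt_IZR; lra.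
  lia.
rewrite INR_IZR_INZ Z2Nat.id //; lra.
Qed.

Lemma floorN_mul0 (x : R) : floorN (INR 0 * x) = 0%N.
Proof.
rewrite /= Rmult_0_l /floorN; have [lb _] := base_Int_part 0.
have : Z.le (Int_part 0) 0 by apply: le_IZR.
by case: (Int_part 0).
Qed.

Lemma kappa_mul_ge1 (k n : nat) : (4 <= k)%N -> (k <= n)%N -> 1 <= kappa k * INR n.
Proof.
move=> /leP k_ge4 /leP k_le_n.
have k4 : 4 <= INR k by have := le_INR _ _ k_ge4; rewrite (INR_IZR_INZ 4).
have kn : INR k <= INR n by apply: le_INR.
have ln_ge1 : 1 <= ln (INR k).
  rewrite -(ln_exp 1); left; apply: ln_increasing; first exact: exp_pos.
  have := exp_le_3; lra.
have inv_k_pos : 0 < / INR k by apply: Rinv_0_lt_compat; lra.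
have k_inv_k : INR k * / INR k = 1 by field; lra.
have n_inv_k : 1 <= INR n * / INR k.
  by rewrite -k_inv_k; apply: Rmult_le_compat_r; lra.
rewrite /kappa /Rdiv Rmult_assoc (Rmult_comm (/ INR k)); nra.
Qed.

Lemma floorN5_lt_floorN10 (x : R) : 1 <= x -> (floorN (5 * x) < floorN (10 * x))%N.
Proof.
move=> x_ge1; have [a1 a2] := @floorN_bounds (10 * x) ltac:(lra).
have [b1 b2] := @floorN_bounds (5 * x) ltac:(lra).
by apply/ltP; apply: INR_lt; lra.
Qed.

Lemma lt_floorN5 (x : R) (d : nat) : 1 <= x -> INR d <= 2 * x -> (d < floorN (5 * x))%N.
Proof.
move=> x_ge1 d_le; have [b1 b2] := @floorN_bounds (5 * x) ltac:(lra).
by apply/ltP; apply: INR_lt; lra.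
Qed.

Lemma Tset_threshold_ge0 (n m k : nat) : 0 <= INR n * rho n m k / 10.
Proof.
rewrite /rho /Rdiv.
have inv_n_ge0 : 0 <= / INR n.
  case: n => [|n]; first by rewrite Rinv_0; lra.
  by left; apply/Rinv_0_lt_compat/lt_0_INR; lia.
have pow_pos : 0 < / 2 ^ k by apply/Rinv_0_lt_compat/pow_lt; lra.
have := pos_INR n; have := pos_INR m.
by move=> m_ge0 n_ge0; repeat apply: Rmult_le_pos => //; lra.
Qed.

End RealBounds.

Import Order.TTheory GRing.Theory Num.Theory.

Lemma Sset_sub_Tset n k m (Phi : kcnf n k m) : Sset Phi \subset Tset Phi.
Proof.
apply/subsetP => s; rewrite !inE => /eqP ->; rewrite cards0 /Rleb.
by case: Rle_dec => // -[]; exact: Tset_threshold_ge0.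
Qed.

Lemma in_Dball_5_10 n k (mu t : assignment n) :
  (t \in Dball k mu 5 10) =
  (Defs.floorN (Rmult 5 (Rmult (kappa k) (INR n))) <= Defs.dist mu t
     <= Defs.floorN (Rmult 10 (Rmult (kappa k) (INR n))))%N.
Proof. by rewrite inE !INR_IZR_INZ. Qed.

Lemma distC n (s t : assignment n) : Defs.dist s t = Defs.dist t s.
Proof. by apply: eq_card => i; rewrite !inE eq_sym. Qed.

Lemma dist_flip n (u s : assignment n) v : (Defs.dist u (flip s v) <= (Defs.dist u s).+1)%N.
Proof.
rewrite /Defs.dist (leq_trans _ (_ : #|v |: [set i | u i != s i]| <= _)%N) //.
  apply/subset_leq_card/subsetP => i; rewrite !inE /flip ffunE.
  by case: (i =P v) => [->|_]; rewrite ?eqxx.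
by rewrite cardsU1 -add1n leq_add2r leq_b1.
Qed.

Lemma flipK n (s : assignment n) v : flip (flip s v) v = s.
Proof. by apply/ffunP => i; rewrite /flip !ffunE; case: eqP => // ->; rewrite negbK. Qed.

Section WalksatSteps.
Local Open Scope ring_scope.
Variables (n k m : nat) (Phi : kcnf n k m).

Lemma step_prob_support s t : step_prob Phi s t != 0 -> t = s \/ exists v, t = flip s v.
Proof.
rewrite /step_prob; case: ifP => _; first by case: (t =P s) => [->|_]; [left | rewrite eqxx].
case: (boolP [exists i, exists j : 'I_k, flip s (tnth (tnth Phi i) j).1 == t]).
  by case/existsP => i /existsP[j /eqP <-] _; right; eexists.
move=> no_flip; rewrite big1 ?mul0r ?eqxx // => i _; apply: big1 => j _.
case: eqP => // flip_ij; case/negP: no_flip.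
by apply/existsP; exists i; apply/existsP; exists j; apply/eqP.
Qed.

Lemma dist_step u s t : step_prob Phi s t != 0 ->
  (Defs.dist u t <= (Defs.dist u s).+1)%N /\ (Defs.dist u s <= (Defs.dist u t).+1)%N.
Proof.
case/step_prob_support => [->|[v ->]]; first by rewrite !leqnSn.
by split; [exact: dist_flip | rewrite -{1}(flipK s v); exact: dist_flip].
Qed.

Lemma step_prob_ge0 s t : 0 <= step_prob Phi s t.
Proof.
rewrite /step_prob; case: ifP => _; first exact: ler0n.
by rewrite divr_ge0 // !sumr_ge0 // => i _; rewrite sumr_ge0.
Qed.

Lemma traj_weight_ge0 w (tr : traj n w) : 0 <= traj_weight Phi tr.
Proof.
rewrite mulr_ge0 ?invr_ge0 ?exprn_ge0 //.
by apply: prodr_ge0 => i _; exact: step_prob_ge0.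
Qed.

Lemma traj_weight_step w (tr : traj n w) t : traj_weight Phi tr != 0 -> (t < w)%N ->
  step_prob Phi (tr (inord t)) (tr (inord t.+1)) != 0.
Proof.
rewrite /traj_weight mulf_eq0 negb_or => /andP[_ /prodf_neq0 steps_neq0] t_lt.
exact: (steps_neq0 (Ordinal t_lt)).
Qed.

Lemma Prc_le_on_support w (E E' F : pred (traj n w)) :
  (forall tr, traj_weight Phi tr != 0 -> E tr -> F tr -> E' tr) ->
  Prc Phi E F <= Prc Phi E' F.
Proof.
move=> EF_sub_E'; rewrite /Prc; apply: ler_wpM2r.
  by rewrite invr_ge0 sumr_ge0 // => tr _; exact: traj_weight_ge0.
rewrite /Pr [X in X <= _]big_mkcond [X in _ <= X]big_mkcond /=.
apply: ler_sum => tr _; case: (eqVneq (traj_weight Phi tr) 0) => [->|w_neq0].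
  by rewrite !if_same.
case: (boolP (E tr && F tr)) => [/andP[Etr Ftr]|_]; last first.
  by case: ifP => _; rewrite ?traj_weight_ge0.
by rewrite (EF_sub_E' tr) // Ftr.
Qed.

End WalksatSteps.

Lemma discrete_crossing (f : nat -> nat) (a b N : nat) :
  (b < a)%N -> (a < f 0)%N -> (f N < b)%N ->
  (forall t, t < N -> f t.+1 <= (f t).+1 /\ f t <= (f t.+1).+1)%N ->
  exists t1 t2, [/\ (t1 < t2)%N, (t2 < N)%N, f t1 = a, f t2 = b &
                    forall t, (t1 <= t <= t2)%N -> (b <= f t <= a)%N].
Proof.
move=> b_lt_a a_lt_f0 fN_lt_b lip.
have [t2 f_t2 t2_first] := ex_minnP (ex_intro (fun t => f t <= b)%N N (ltnW fN_lt_b)).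
have t2_le_N : (t2 <= N)%N by apply: t2_first; lia.
case: t2 f_t2 t2_first t2_le_N => [|s] f_t2 t2_first t2_le_N; first lia.
have f_s : (b < f s)%N by rewrite ltnNge; apply/negP => /t2_first; lia.
have f_t2_eq : f s.+1 = b by have [_] := lip s t2_le_N; lia.
have t2_lt_N : (s.+1 < N)%N.
  rewrite ltn_neqAle t2_le_N andbT; apply/eqP => e.
  by move: fN_lt_b; rewrite -e f_t2_eq ltnn.
have t1_bound t : (t <= s.+1) && (a <= f t) -> (t <= s.+1)%N by case/andP.
have [t1 /andP[t1_le a_le_f_t1] t1_last] :=
  ex_maxnP (ex_intro (fun t => (t <= s.+1) && (a <= f t)) 0%N (ltnW a_lt_f0)) t1_bound.
have t1_lt : (t1 < s.+1)%N.
  rewrite ltn_neqAle t1_le andbT; apply/eqP => e.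
  by move: a_le_f_t1; rewrite e f_t2_eq leqNgt b_lt_a.
have f_after_t1 : (f t1.+1 < a)%N.
  by rewrite ltnNge; apply/negP => fa; have := t1_last t1.+1; rewrite fa t1_lt; lia.
have f_t1_eq : f t1 = a by have [] := lip t1 ltac:(lia); lia.
exists t1, s.+1; split => // t /andP[t1_le_t t_le_t2]; apply/andP; split.
- case: (ltnP t s.+1) => [t_lt|]; last by move=> t_ge; rewrite (_ : t = s.+1) ?f_t2_eq; lia.
  by rewrite leqNgt; apply/negP => /ltnW /t2_first; lia.
- case: (ltnP t1 t) => [t1_lt_t|]; last by move=> t_le; rewrite (_ : t = t1) ?f_t1_eq; lia.
  by rewrite leqNgt; apply/negP => /ltnW fa; have := t1_last t; rewrite fa t_le_t2; lia.
Qed.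

Section SatisfyingRunsCross.
Variables (n k m : nat) (Phi : kcnf n k m) (M : {set assignment n}).
Let a := Defs.floorN (Rmult 10 (Rmult (kappa k) (INR n))).
Let b := Defs.floorN (Rmult 5 (Rmult (kappa k) (INR n))).
Hypothesis b_lt_a : (b < a)%N.
Hypothesis Tset_near_mist :
  forall s, s \in Tset Phi -> exists2 mu, mu \in M & (Defs.dist s mu < b)%N.
Hypothesis far_outside_Dunion :
  forall mu s, mu \in M -> s \notin Dunion k M -> (a < Defs.dist mu s)%N.

Lemma satisfying_run_in_EvH w (tr : traj n w) :
  traj_weight Phi tr != 0%R -> EvSat Phi tr -> EvA k M tr -> EvH Phi M tr.
Proof.
move=> w_neq0 /existsP[t_sat sat] start_out.
pose F t := tr (inord t).
have F_val (t : 'I_w.+1) : F t = tr t by rewrite /F inord_val.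
have reaches_T : exists t, (t <= w)%N && (F t \in Tset Phi).
  by exists t_sat; rewrite F_val -ltnS ltn_ord (subsetP (Sset_sub_Tset Phi)).
have [tau /andP[tau_le_w F_tau] tau_first] := ex_minnP reaches_T.
have [mu mu_M near_mu] := Tset_near_mist F_tau.
have [t1 [t2 [t12 t2_lt e1 e2 annulus]]] :=
  @discrete_crossing (fun t => Defs.dist mu (F t)) a b tau b_lt_a
    ltac:(by rewrite /= -[0%N]/(val (@ord0 w)) F_val far_outside_Dunion)
    ltac:(by rewrite /= distC)
    ltac:(move=> t t_lt; apply/dist_step/traj_weight_step => //; lia).
apply/existsP; exists mu; rewrite mu_M /=.
apply/existsP; exists (inord t1); apply/existsP; exists (inord t2).
rewrite /EvHmu !inordK ?ltnS ?(leq_trans (ltnW t12)) ?(leq_trans (ltnW t2_lt)) //.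
rewrite t12 !(distC _ mu) e1 e2 !eqxx /=.
apply/forallP => t; apply/implyP => t_between; rewrite -F_val.
rewrite inE in_Dball_5_10 annulus // andbT.
apply/negP => F_t; have := tau_first t; rewrite F_t -ltnS ltn_ord /=.
by move=> /(_ isT); case/andP: t_between => _ t_le_t2; lia.
Qed.

End SatisfyingRunsCross.

Local Open Scope ring_scope.

Theorem mainTheorem5 :
  exists k0 : nat, forall k : nat, (k0 <= k)%N ->
  exists n0 : nat, forall n : nat, (n0 <= n)%N ->
  forall (m : nat) (Phi : kcnf n k m) (M : {set assignment n}),
    is_mist Phi M ->
    Prc Phi (EvSat Phi (w := omega n k)) (EvA k (w := omega n k) M)
      <= Prc Phi (EvH Phi (w := omega n k) M) (EvA k (w := omega n k) M).
Proof.
exists 4%N => k k_ge4; exists k => n k_le_n m Phi M [_ _ mist_covers].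
have x_ge1 := kappa_mul_ge1 k_ge4 k_le_n.
apply: Prc_le_on_support => tr w_neq0 sat start_out.
apply: satisfying_run_in_EvH w_neq0 sat start_out.
- exact: floorN5_lt_floorN10.
- move=> s s_T; have [mu mu_M close] := mist_covers s s_T.
  by exists mu => //; exact: lt_floorN5.
- move=> mu s mu_M; apply: contraR; rewrite -leqNgt => far.
  by apply/bigcupP; exists mu; rewrite // inE floorN_mul0 (INR_IZR_INZ 10) far.
Qed.
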